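(* If $G$ is a $d$-regular Hadamard diagonalizable graph with $d$ odd, then for every vertex $u$ of $G$, $\uparrow^{2}G$ has Laplacian perfect state transfer between $(0,u)$ and $(1,u)$ at time $\frac{\pi}{2}$.
   Context: All graphs are simple, undirected and unweighted. A graph on $N$ vertices is Hadamard diagonalizable if its Laplacian matrix $L=D-A$ is diagonalizable by a Hadamard matrix, i.e. $L=\frac{1}{N}H\Lambda H^T$ for some diagonal $\Lambda$ and some $N\times N$ matrix $H$ with entries $\pm1$ satisfying $HH^T=NI$. The blow-up $\uparrow^{2}G$ has vertex set $\mathbb{Z}_2\times V(G)$, with $(l,u)\sim(m,v)$ iff $u\sim v$ in $G$. A graph with Laplacian $L$ has Laplacian perfect state transfer between $a,b$ at time $\tau$ if $\exp(i\tau L)\mathbf{e}_a=\gamma\mathbf{e}_b$ for some $\gamma\in\mathbb{C}$. *)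

From HB Require Import structures.
From mathcomp Require Import all_boot all_order all_algebra.
From mathcomp Require Import all_classical all_reals all_analysis.
From mathcomp.real_closed Require Import complex.

Set Implicit Arguments.
Unset Strict Implicit.
Unset Printing Implicit Defensive.

Import Order.TTheory GRing.Theory Num.Theory.
Import numFieldNormedType.Exports.
Local Open Scope ring_scope.

Definition simple_graph (V : finType) (e : rel V) : Prop :=
  symmetric e /\ irreflexive e.

Definition regular (V : finType) (e : rel V) (d : nat) : Prop :=
  forall v : V, #|[set w | e v w]| = d.

Definition laplacian (R : pzRingType) (V : finType) (e : rel V) : 'M[R]_#|V| :=
  \matrix_(i, j)
    ((if i == j then #|[set w | e (enum_val i) w]|%:R else 0)
     - (e (enum_val i) (enum_val j))%:R).

Definition hadamard (R : pzRingType) (N : nat) (H : 'M[R]_N) : Prop :=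
  (forall i j, H i j = 1 \/ H i j = -1) /\ H *m H^T = N%:R%:M.

Definition hadamard_diagonalizable (R : fieldType) (V : finType) (e : rel V) : Prop :=
  exists (H : 'M[R]_#|V|) (lam : 'rV[R]_#|V|),
    hadamard H /\
    laplacian R e = (#|V|%:R)^-1 *: (H *m diag_mx lam *m H^T).

Definition blowup2 (V : finType) (e : rel V) : rel ('I_2 * V) :=
  fun x y => e x.2 y.2.

Local Open Scope classical_set_scope.
Local Open Scope complex_scope.

Definition expmx_partial (R : rcfType) (n : nat) (A : 'M[R[i]]_n) (k : nat)
  : 'M[R[i]]_n :=
  \sum_(j < k) ((j`!%:R)^-1 *: A ^+ j).

Definition is_expmx (R : realType) (n : nat) (A E : 'M[R[i]]_n) : Prop :=
  forall i j : 'I_n,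
    ((fun k => complex.Re (expmx_partial A k i j)) @ \oo --> complex.Re (E i j)) /\
    ((fun k => complex.Im (expmx_partial A k i j)) @ \oo --> complex.Im (E i j)).

Definition basis_vec (R : pzRingType) (n : nat) (a : 'I_n) : 'cV[R]_n :=
  \col_j (j == a)%:R.

Definition laplacian_pst (R : realType) (V : finType) (e : rel V)
    (a b : V) (tau : R) : Prop :=
  exists E : 'M[R[i]]_#|V|,
    is_expmx (('i * tau%:C) *: map_mx (fun x : R => x%:C) (laplacian R e)) E /\
    exists gamma : R[i],
      E *m basis_vec _ (enum_rank a) = gamma *: basis_vec _ (enum_rank b).

From HB Require Import structures.
From mathcomp Require Import all_boot all_order all_algebra.
From mathcomp Require Import all_classical all_reals all_analysis.
From mathcomp.real_closed Require Import complex.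
From mathcomp Require Import ring.

(* Let H be the Hadamard matrix diagonalizing L(G), with eigenvalues lam_w.
   The eigen-equation at a vertex u reads
   lam_w = d - H(u,w) * sum_(v ~ u) H(v,w); the sum consists of d signs, so it
   has the parity of d and lam_w is an even integer.  The Laplacian of the
   blow-up is 2d I - J_2 (x) A, which is diagonalized by the Hadamard matrix
   P = [[1,1],[1,-1]] (x) H, with eigenvalue 2 lam_w on (1,1) (x) H_w and 2d
   on (1,-1) (x) H_w.  Hence the exponential series of i pi/2 L is
   P exp(i pi/2 D) P^-1, and its diagonal entries are the phases
   exp(i pi lam_w) = 1 and exp(i pi d) = -1 (d odd).  The operator acting as 1
   on the first eigenspace and -1 on the second is the permutation swapping
   the two copies of V, which maps e_(0,u) to e_(1,u). *)

Set Implicit Arguments.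
Unset Strict Implicit.
Unset Printing Implicit Defensive.

Import Order.TTheory GRing.Theory Num.Theory.
Import numFieldNormedType.Exports.
Local Open Scope ring_scope.

Section FinTypeIndexedMatrices.
Variable T : finType.

Definition fmx (R : Type) (f : T -> T -> R) : 'M[R]_#|T| :=
  \matrix_(i, j) f (enum_val i) (enum_val j).

Lemma fmxE (R : Type) (f : T -> T -> R) x y :
  fmx f (enum_rank x) (enum_rank y) = f x y.
Proof. by rewrite mxE !enum_rankK. Qed.

Lemma eq_fmx (R : Type) (f g : T -> T -> R) : f =2 g -> fmx f = fmx g.
Proof. by move=> fg; apply/matrixP => i j; rewrite !mxE fg. Qed.

Lemma eq_mx_enum_rank (R : Type) (A B : 'M[R]_#|T|) :
  (forall x y, A (enum_rank x) (enum_rank y) = B (enum_rank x) (enum_rank y)) -> A = B.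
Proof. by move=> AB; apply/matrixP => i j; rewrite -(enum_valK i) -(enum_valK j) AB. Qed.

Lemma sum_enum_rank (M : nmodType) (F : 'I_#|T| -> M) :
  \sum_i F i = \sum_x F (enum_rank x).
Proof. exact: (reindex _ (onW_bij _ (@enum_rank_bij T))). Qed.

Lemma mulmx_enum_rankE (R : pzSemiRingType) (A B : 'M[R]_#|T|) x y :
  (A *m B) (enum_rank x) (enum_rank y) =
  \sum_z A (enum_rank x) (enum_rank z) * B (enum_rank z) (enum_rank y).
Proof. by rewrite mxE sum_enum_rank. Qed.

Lemma mul_fmx (R : pzSemiRingType) (f g : T -> T -> R) :
  fmx f *m fmx g = fmx (fun x y => \sum_z f x z * g z y).
Proof.
apply: eq_mx_enum_rank => x y; rewrite mulmx_enum_rankE fmxE.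
by apply: eq_bigr => z _; rewrite !fmxE.
Qed.

Lemma scalar_fmx (R : pzSemiRingType) (a : R) :
  a%:M = fmx (fun x y => (x == y)%:R * a).
Proof. by apply: eq_mx_enum_rank => x y; rewrite fmxE mxE (inj_eq enum_rank_inj) mulr_natl. Qed.

Lemma mul_fmx_diag (R : pzSemiRingType) (f : T -> T -> R) (g : T -> R) :
  fmx f *m diag_mx (\row_k g (enum_val k)) = fmx (fun x y => f x y * g y).
Proof. by rewrite mul_mx_diag; apply/matrixP => i j; rewrite !mxE. Qed.

Lemma map_fmx (R S : Type) (phi : R -> S) (f : T -> T -> R) :
  map_mx phi (fmx f) = fmx (fun x y => phi (f x y)).
Proof. by apply/matrixP => i j; rewrite !mxE. Qed.

Lemma trmx_fmx (R : Type) (f : T -> T -> R) : (fmx f)^T = fmx (fun x y => f y x).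
Proof. by apply/matrixP => i j; rewrite !mxE. Qed.

End FinTypeIndexedMatrices.

Lemma laplacianE (R : pzRingType) (V : finType) (e : rel V) :
  laplacian R e = fmx (fun u v => (u == v)%:R * #|[set w | e u w]|%:R - (e u v)%:R).
Proof.
by apply/matrixP => i j; rewrite !mxE (inj_eq enum_val_inj); case: eqP => [->|];
  rewrite ?mul1r ?mul0r.
Qed.

Section HadamardMatrix.
Variables (R : fieldType) (n : nat) (H : 'M[R]_n).
Hypotheses (HHt : H *m H^T = n%:R%:M) (n_neq0 : n%:R != 0 :> R).

Lemma hadamard_mulmxV : H *m (n%:R^-1 *: H^T) = 1%:M.
Proof. by rewrite -scalemxAr HHt scale_scalar_mx mulVf. Qed.

Lemma hadamard_mulVmx : (n%:R^-1 *: H^T) *m H = 1%:M.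
Proof. exact: mulmx1C hadamard_mulmxV. Qed.

Lemma hadamard_diagP (L : 'M[R]_n) (lam : 'rV[R]_n) :
  L = n%:R^-1 *: (H *m diag_mx lam *m H^T) <-> L *m H = H *m diag_mx lam.
Proof.
rewrite scalemxAr; split=> [->|LH]; first by rewrite -mulmxA hadamard_mulVmx mulmx1.
by rewrite -LH -mulmxA hadamard_mulmxV mulmx1.
Qed.

End HadamardMatrix.

Lemma sum_pm1 (R : comPzRingType) (I : Type) (s : seq I) (f : I -> R) :
  (forall x, f x = 1 \/ f x = -1) ->
  exists2 m, (m <= size s)%N & \sum_(x <- s) f x = (size s)%:R - (m.*2)%:R.
Proof.
move=> f_pm1; elim: s => [|x s [m le_m_s IHs]]; first by exists 0%N; rewrite ?big_nil ?subr0.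
rewrite big_cons IHs /=; case: (f_pm1 x) => ->.
  by exists m; [exact: leqW | rewrite -(addn1 (size s)) natrD; ring].
by exists m.+1; rewrite // doubleS -(addn1 (size s)) -addn2 !natrD; ring.
Qed.

Section RegularGraph.
Variables (V : finType) (e : rel V) (d : nat).
Hypothesis e_reg : regular e d.

Lemma regular_laplacianE (R : pzRingType) :
  laplacian R e = fmx (fun u v => (u == v)%:R * d%:R - (e u v)%:R).
Proof. by rewrite laplacianE; apply: eq_fmx => u v; rewrite e_reg. Qed.

Lemma regular_blowup2 : regular (blowup2 e) (2 * d).
Proof.
move=> x; have -> : [set y | blowup2 e x y] = finset.setX [set: 'I_2] [set w | e x.2 w].
  by apply/setP => y; rewrite !inE.
by rewrite cardsX cardsT card_ord e_reg.
Qed.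

Variables (R : comPzRingType) (H : 'M[R]_#|V|) (lam : 'rV[R]_#|V|).
Hypothesis LH : laplacian R e *m H = H *m diag_mx lam.

Lemma laplacian_eigen_sum u w :
  \sum_v (e u v)%:R * H (enum_rank v) (enum_rank w) =
  (d%:R - lam 0 (enum_rank w)) * H (enum_rank u) (enum_rank w).
Proof.
have LH_uw : (laplacian R e *m H) (enum_rank u) (enum_rank w) =
    d%:R * H (enum_rank u) (enum_rank w) - \sum_v (e u v)%:R * H (enum_rank v) (enum_rank w).
  rewrite mulmx_enum_rankE regular_laplacianE; under eq_bigr do rewrite fmxE mulrBl.
  rewrite sumrB (bigD1 u) //= eqxx mul1r big1 ?addr0 // => v /negbTE.
  by rewrite eq_sym => ->; rewrite !mul0r.
have := congr1 (fun A : 'M[R]_#|V| => A (enum_rank u) (enum_rank w)) LH.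
rewrite /= LH_uw mul_mx_diag mxE => eq_uw.
by rewrite mulrBl [lam 0 _ * _]mulrC -eq_uw opprB addrC subrK.
Qed.

Lemma pm1_eigval_even :
  (forall i j, H i j = 1 \/ H i j = -1) -> forall w, exists k, lam 0 w = (k.*2)%:R.
Proof.
(* Any vertex can serve as [u]; the one of rank [w] is at hand. *)
move=> H_pm1 w; have := laplacian_eigen_sum (enum_val w) (enum_val w).
rewrite enum_valK; set u := enum_val w.
have -> : \sum_v (e u v)%:R * H (enum_rank v) w =
          \sum_(v <- enum [set v | e u v]) H (enum_rank v) w.
  rewrite big_enum /= [RHS]big_mkcond; apply: eq_bigr => v _; rewrite inE.
  by case: (e u v); rewrite ?mul1r ?mul0r.
have [m] := sum_pm1 (enum [set v | e u v]) (fun v => H_pm1 (enum_rank v) w).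
rewrite -cardE e_reg => le_m_d ->.
case: (H_pm1 w w) => ->; rewrite ?mulr1 ?mulrN1 => eq_lam.
  by exists m; apply/oppr_inj/(addrI d%:R); rewrite -eq_lam.
exists (d - m)%N; rewrite doubleB natrB ?leq_double // -addnn natrD.
by rewrite -[lam 0 w](subrK d%:R) -opprB -eq_lam addrAC.
Qed.

End RegularGraph.

Lemma sum_pairM (R : pzSemiRingType) (I J : finType) (F : I -> R) (G : J -> R) :
  \sum_(x : I * J) F x.1 * G x.2 = (\sum_i F i) * (\sum_j G j).
Proof. by rewrite big_distrlr pair_big. Qed.

Lemma sum_ord2 (M : nmodType) (F : 'I_2 -> M) : \sum_(l < 2) F l = F ord0 + F ord_max.
Proof. by rewrite big_ord_recl big_ord1; congr (_ + F _); apply: val_inj. Qed.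

Lemma ord2_ind (P : 'I_2 -> Prop) : P ord0 -> P ord_max -> forall l, P l.
Proof. by move=> P0 P1 [[|[|//]] lt_l2]; [move: P0 | move: P1]; congr P; apply: val_inj. Qed.

Section Hadamard2.
Variable R : comPzRingType.

(* The Sylvester matrix [[1, 1], [1, -1]], with row index [l] and column index [m]. *)
Definition hadamard2 (l m : 'I_2) : R := if m == ord0 then 1 else (-1) ^+ l.

Lemma hadamard2_col_sum m : \sum_l hadamard2 l m = (m == ord0)%:R * 2.
Proof. by rewrite sum_ord2 /hadamard2; elim/ord2_ind: m => /=; rewrite ?expr1; ring. Qed.

Lemma hadamard2_rows_dot (g : 'I_2 -> R) l l' :
  \sum_m hadamard2 l m * hadamard2 l' m * g m =
  g ord0 + (if l == l' then 1 else -1) * g ord_max.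
Proof.
rewrite sum_ord2 /hadamard2 /=.
by elim/ord2_ind: l; elim/ord2_ind: l' => /=; rewrite ?expr0 ?expr1; ring.
Qed.

End Hadamard2.

Section BlowupBasis.
Variables (R : comPzRingType) (V : finType) (H : 'M[R]_#|V|).

Definition blowup_basis : 'M[R]_#|{: 'I_2 * V}| :=
  fmx (fun x y => hadamard2 R x.1 y.1 * H (enum_rank x.2) (enum_rank y.2)).

Lemma blowup_basis_diag_trmx (g : 'I_2 -> R) :
  H *m H^T = #|V|%:R%:M ->
  blowup_basis *m diag_mx (\row_k g (enum_val k).1) *m blowup_basis^T =
  fmx (fun x y => (x.2 == y.2)%:R * #|V|%:R *
                  (g ord0 + (if x.1 == y.1 then 1 else -1) * g ord_max)).
Proof.
move=> HHt; rewrite /blowup_basis (mul_fmx_diag _ (fun y : 'I_2 * V => g y.1)).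
rewrite trmx_fmx mul_fmx; apply: eq_fmx => x y.
have H_rows u u' : \sum_w H (enum_rank u) (enum_rank w) * H (enum_rank u') (enum_rank w) =
                   (u == u')%:R * #|V|%:R.
  have := congr1 (fun A : 'M[R]_#|V| => A (enum_rank u) (enum_rank u')) HHt.
  rewrite /= mulmx_enum_rankE scalar_fmx fmxE => <-.
  by apply: eq_bigr => w _; rewrite mxE.
rewrite -(hadamard2_rows_dot g) -H_rows [RHS]mulrC -sum_pairM.
by apply: eq_bigr => z _; ring.
Qed.

Variables (e : rel V) (d : nat) (lam : 'rV[R]_#|V|).

Definition blowup_eigval (y : 'I_2 * V) : R :=
  if y.1 == ord0 then 2 * lam 0 (enum_rank y.2) else 2 * d%:R.

Lemma blowup_laplacian_eigen :
  regular e d -> laplacian R e *m H = H *m diag_mx lam ->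
  laplacian R (blowup2 e) *m blowup_basis =
  blowup_basis *m diag_mx (\row_k blowup_eigval (enum_val k)).
Proof.
move=> e_reg LH; rewrite /blowup_basis (regular_laplacianE (regular_blowup2 e_reg)).
rewrite mul_fmx mul_fmx_diag.
apply: eq_fmx => -[l u] [m w] /=; under eq_bigr do rewrite mulrBl.
rewrite sumrB (bigD1 (l, u)) //= eqxx mul1r big1 ?addr0 => [|z /negbTE]; last first.
  by rewrite eq_sym => ->; rewrite !mul0r.
have -> : \sum_(z : 'I_2 * V) (e u z.2)%:R * (hadamard2 R z.1 m * H (enum_rank z.2) (enum_rank w))
          = (\sum_l hadamard2 R l m) * \sum_v (e u v)%:R * H (enum_rank v) (enum_rank w).
  by rewrite -sum_pairM; apply: eq_bigr => z _; ring.
rewrite hadamard2_col_sum (laplacian_eigen_sum e_reg LH) /blowup_eigval /=.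
by elim/ord2_ind: m => /=; rewrite natrM /hadamard2 /=; ring.
Qed.

End BlowupBasis.

Definition blowup_swap (R : pzRingType) (V : finType) : 'M[R]_#|{: 'I_2 * V}| :=
  fmx (fun x y => ((x.2 == y.2) && (x.1 != y.1))%:R).

Lemma map_blowup_swap (R S : pzRingType) (f : {rmorphism R -> S}) (V : finType) :
  map_mx f (blowup_swap R V) = blowup_swap S V.
Proof. by rewrite map_fmx; apply: eq_fmx => x y; rewrite rmorph_nat. Qed.

Lemma blowup_swap_basis_vec (R : pzRingType) (V : finType) (u : V) :
  blowup_swap R V *m basis_vec R (enum_rank (ord0, u)) = basis_vec R (enum_rank (ord_max, u)).
Proof.
apply/matrixP => i j; rewrite /blowup_swap !mxE (bigD1 (enum_rank (ord0, u))) //= big1 ?addr0; last first.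
  by move=> k /negbTE k_neq; rewrite !mxE k_neq mulr0.
rewrite !mxE eqxx mulr1 enum_rankK -(inj_eq enum_val_inj) enum_rankK.
by case: (enum_val i) => l v; rewrite xpair_eqE; elim/ord2_ind: l; rewrite /= ?andbF ?andbT.
Qed.

Section BlowupBasisInverse.
Variables (R : numFieldType) (V : finType) (H : 'M[R]_#|V|).
Hypothesis HHt : H *m H^T = #|V|%:R%:M.

Lemma card_blowup : #|{: 'I_2 * V}| = (2 * #|V|)%N.
Proof. by rewrite card_prod card_ord. Qed.

Lemma blowup_basis_hadamard :
  blowup_basis H *m (blowup_basis H)^T = #|{: 'I_2 * V}|%:R%:M.
Proof.
have := blowup_basis_diag_trmx (fun=> 1) HHt.
have -> : \row_k (fun=> 1 : R) (enum_val k).1 = const_mx 1 :> 'rV[R]_#|{: 'I_2 * V}|.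
  by apply/matrixP => i j; rewrite !mxE.
rewrite diag_const_mx mulmx1 => ->; rewrite scalar_fmx; apply: eq_fmx => -[l u] [m w] /=.
by rewrite card_blowup xpair_eqE; case: (l =P m); case: (u =P w) => _ _ /=; rewrite natrM; ring.
Qed.

Lemma blowup_basis_swap :
  blowup_basis H *m diag_mx (\row_k if (enum_val k).1 == ord0 then 1 else -1)
    *m (#|{: 'I_2 * V}|%:R^-1 *: (blowup_basis H)^T) = blowup_swap R V.
Proof.
rewrite /blowup_swap -scalemxAr (blowup_basis_diag_trmx (fun m => if m == ord0 then 1 else -1) HHt).
apply: eq_mx_enum_rank => x y; rewrite mxE !fmxE card_blowup.
have n_neq0 : #|V|%:R != 0 :> R by rewrite pnatr_eq0 -lt0n; apply/card_gt0P; exists x.2.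
case: (x.2 =P y.2) => _; case: (x.1 =P y.1) => _ /=;
  by rewrite ?mul0r ?mulr0 // natrM; field; exact: n_neq0.
Qed.

End BlowupBasisInverse.

Local Open Scope classical_set_scope.
Local Open Scope complex_scope.
Local Notation Re := complex.Re.
Local Notation Im := complex.Im.

Section ComplexSeries.
Variable R : realType.
Implicit Types (s t : nat -> R[i]) (a b z : R[i]).

Definition cvgC s z : Prop :=
  (fun n => Re (s n)) @ \oo --> Re z /\ (fun n => Im (s n)) @ \oo --> Im z.

Lemma Re_mulc a b : Re (a * b) = Re a * Re b - Im a * Im b.
Proof. by case: a => ? ?; case: b. Qed.

Lemma Im_mulc a b : Im (a * b) = Re a * Im b + Im a * Re b.
Proof. by case: a => ? ?; case: b. Qed.

Lemma cvgC_cst z : cvgC (fun=> z) z.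
Proof. by split; apply: cvg_cst. Qed.

Lemma cvgCD s t a b : cvgC s a -> cvgC t b -> cvgC (fun n => s n + t n) (a + b).
Proof. by move=> [sRe sIm] [tRe tIm]; split; rewrite raddfD; under eq_cvg do rewrite raddfD;
  apply: cvgD. Qed.

Lemma cvgCMl c s a : cvgC s a -> cvgC (fun n => c * s n) (c * a).
Proof.
move=> [sRe sIm]; split.
  by rewrite Re_mulc; under eq_cvg do rewrite Re_mulc; apply: cvgB; apply: cvgMl_tmp.
by rewrite Im_mulc; under eq_cvg do rewrite Im_mulc; apply: cvgD; apply: cvgMl_tmp.
Qed.

Lemma cvgC_sum (I : Type) (r : seq I) (F : I -> nat -> R[i]) (z : I -> R[i]) :
  (forall k, cvgC (F k) (z k)) ->
  cvgC (fun n => \sum_(k <- r) F k n) (\sum_(k <- r) z k).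
Proof.
move=> Fz; elim: r => [|k r IHr].
  by rewrite big_nil; under [fun n => _]funext do rewrite big_nil; exact: cvgC_cst.
by rewrite big_cons; under [fun n => _]funext do rewrite big_cons; exact: cvgCD.
Qed.

Definition expC_partial z (n : nat) : R[i] := \sum_(j < n) (j`!%:R)^-1 * z ^+ j.

Lemma expr_i (j : nat) :
  'i ^+ j = if odd j then 'i * ((-1) ^+ j./2)%:C else ((-1) ^+ j./2)%:C :> R[i].
Proof.
rewrite -{1}(odd_double_half j) exprD -muln2 mulnC exprM sqr_i rmorphXn rmorphN1.
by case: (odd j); rewrite ?expr1 ?expr0 ?mul1r.
Qed.

Lemma exp_i_coeff (y : R) (j : nat) :
  (j`!%:R)^-1 * ('i * y%:C) ^+ j = cos_coeff y j +i* sin_coeff y j.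
Proof.
rewrite exprMn expr_i -rmorphXn -(rmorph_nat (real_complex R)) -fmorphV.
rewrite /cos_coeff /sin_coeff /=; apply/eqP; rewrite eq_complex /=.
case j_odd: (odd j) => /=; simpc; rewrite /= -?exprnP ?andbT mulrC //.
by rewrite -(odd_halfK j_odd) doubleK.
Qed.

Lemma cvgC_expC_i (y : R) : cvgC (expC_partial ('i * y%:C)) (cos y +i* sin y).
Proof.
have ReE : (fun n => Re (expC_partial ('i * y%:C) n)) = series (cos_coeff y).
  apply/funext => n; rewrite /series /= big_mkord raddf_sum.
  by apply: eq_bigr => j _; rewrite exp_i_coeff.
have ImE : (fun n => Im (expC_partial ('i * y%:C) n)) = series (sin_coeff y).
  apply/funext => n; rewrite /series /= big_mkord raddf_sum.
  by apply: eq_bigr => j _; rewrite exp_i_coeff.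
rewrite /cvgC ReE ImE /= !unlock.
by split; [exact: is_cvg_series_cos_coeff | exact: is_cvg_series_sin_coeff].
Qed.

End ComplexSeries.

Section ExpConjugateDiagonal.
Variables (R : realType) (n : nat) (P Q : 'M[R[i]]_n).
Hypotheses (PQ : P *m Q = 1%:M) (QP : Q *m P = 1%:M).

Lemma conj_diag_entry (d : 'I_n -> R[i]) i j :
  (P *m diag_mx (\row_k d k) *m Q) i j = \sum_k P i k * Q k j * d k.
Proof. by rewrite mul_mx_diag mxE; apply: eq_bigr => k _; rewrite !mxE mulrAC. Qed.

Lemma conj_diag_expr (mu : 'I_n -> R[i]) m :
  (P *m diag_mx (\row_k mu k) *m Q) ^+ m = P *m diag_mx (\row_k mu k ^+ m) *m Q.
Proof.
elim: m => [|m IHm].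
  rewrite expr0 (_ : \row_k _ = const_mx 1) ?diag_const_mx ?mulmx1 ?PQ //.
  by apply/matrixP => a b; rewrite !mxE.
rewrite exprS IHm -mulmxE -!mulmxA (mulmxA Q P) QP mul1mx (mulmxA (diag_mx _)).
rewrite mulmx_diag !mulmxA; congr (_ *m diag_mx _ *m _).
by apply/matrixP => a b; rewrite !mxE exprS.
Qed.

Lemma is_expmx_conj_diag (mu z : 'I_n -> R[i]) :
  (forall k, cvgC (expC_partial (mu k)) (z k)) ->
  is_expmx (P *m diag_mx (\row_k mu k) *m Q) (P *m diag_mx (\row_k z k) *m Q).
Proof.
move=> muz i j.
have partialE : (fun m => expmx_partial (P *m diag_mx (\row_k mu k) *m Q) m i j) =
                (fun m => \sum_k P i k * Q k j * expC_partial (mu k) m).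
  apply/funext => m; rewrite /expmx_partial summxE.
  under eq_bigr do rewrite mxE conj_diag_expr conj_diag_entry mulr_sumr.
  rewrite exchange_big /=; apply: eq_bigr => k _; rewrite mulr_sumr.
  by apply: eq_bigr => l _; ring.
have : cvgC (fun m => \sum_k P i k * Q k j * expC_partial (mu k) m) (\sum_k P i k * Q k j * z k).
  by apply: cvgC_sum => k; apply: cvgCMl.
by rewrite -partialE -conj_diag_entry.
Qed.

End ExpConjugateDiagonal.

Lemma is_expmx_i_conj_diag (R : realType) n (P Q : 'M[R]_n) (mu z : 'I_n -> R) (t : R) :
  P *m Q = 1%:M -> Q *m P = 1%:M ->
  (forall k, cos (t * mu k) +i* sin (t * mu k) = (z k)%:C) ->
  is_expmx (('i * t%:C) *: map_mx (real_complex R) (P *m diag_mx (\row_k mu k) *m Q))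
           (map_mx (real_complex R) (P *m diag_mx (\row_k z k) *m Q)).
Proof.
move=> PQ QP muz; rewrite !map_mxM !map_diag_mx scalemxAl scalemxAr.
have -> : ('i * t%:C) *: diag_mx (map_mx (real_complex R) (\row_k mu k)) =
          diag_mx (\row_k ('i * (t * mu k)%:C)).
  by apply/matrixP => a b; rewrite !mxE mulrnAr [in RHS]rmorphM mulrA.
have -> : map_mx (real_complex R) (\row_k z k) = \row_k (cos (t * mu k) +i* sin (t * mu k)).
  by apply/matrixP => a b; rewrite !mxE muz.
apply: is_expmx_conj_diag => [||k]; last exact: cvgC_expC_i.
  by rewrite -map_mxM PQ map_mx1.
by rewrite -map_mxM QP map_mx1.
Qed.

Lemma cos_sin_pihalf_double (R : realType) (n : nat) :
  cos (pi / 2 * (2 * n%:R)) +i* sin (pi / 2 * (2 * n%:R)) = ((-1) ^+ n)%:C :> R[i].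
Proof.
have -> : pi / 2 * (2 * n%:R) = pi *+ n :> R by rewrite -mulr_natr; field.
rewrite -[pi *+ n]add0r (alternatingn (@cosDpi R)) (alternatingn (@sinDpi R)).
by rewrite cos0 sin0 mulr1 mulr0.
Qed.

Theorem corollary5 (R : realType) (V : finType) (e : rel V) (d : nat) :
  simple_graph e -> regular e d -> hadamard_diagonalizable R e -> odd d ->
  forall u : V,
    laplacian_pst (blowup2 e) (ord0, u) (ord_max, u) (pi / 2 :> R).
Proof.
move=> _ e_reg [H [lam [[H_pm1 HHt] L_diag]]] d_odd u.
have N_neq0 : #|V|%:R != 0 :> R by rewrite pnatr_eq0 -lt0n; apply/card_gt0P; exists u.
have LH := (hadamard_diagP HHt N_neq0 _ _).1 L_diag.
have PPt := blowup_basis_hadamard HHt.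
have N2_neq0 : #|{: 'I_2 * V}|%:R != 0 :> R by rewrite card_blowup natrM mulf_neq0.
have L2E : laplacian R (blowup2 e) = blowup_basis H
    *m diag_mx (\row_k blowup_eigval d lam (enum_val k))
    *m (#|{: 'I_2 * V}|%:R^-1 *: (blowup_basis H)^T).
  by rewrite -scalemxAr; apply/(hadamard_diagP PPt N2_neq0); exact: blowup_laplacian_eigen.
exists (blowup_swap R[i] V); split; last first.
  by exists 1; rewrite scale1r blowup_swap_basis_vec.
rewrite -(map_blowup_swap (real_complex R)) -(blowup_basis_swap HHt) L2E.
apply: is_expmx_i_conj_diag.
- exact: hadamard_mulmxV.
- exact: hadamard_mulVmx.
move=> k; rewrite /blowup_eigval; case: (enum_val k) => m w /=.
elim/ord2_ind: m => /=.
  have [n ->] := pm1_eigval_even e_reg LH H_pm1 (enum_rank w).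
  by rewrite cos_sin_pihalf_double -signr_odd odd_double.
by rewrite cos_sin_pihalf_double -signr_odd d_odd.
Qed.
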